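(* Let $2\le k\le d+1$ and let $\mathcal{Q}=\{Q_1,\dots,Q_k\}$ be a collection of cubes in $\mathbb{R}^d$ that is transversal. Then each $Q_l$ can be partitioned into finitely many (a number bounded independently of anything but the collection) sub-cubes $Q_l=\bigcup_i Q_{l,i}$ such that every collection $\widetilde{\mathcal{Q}}=\{\widetilde Q_1,\dots,\widetilde Q_k\}$ with $\widetilde Q_l\in\{Q_{l,i}\}_i$ for each $l$ is weakly transversal.
   Context: ''Cube'' means any rectangular box in $\mathbb{R}^d$ (sides need not be equal). A collection of cubes $Q_1,\dots,Q_k$ is transversal if the caps $S_j=\{(\xi,|\xi|^2):\xi\in Q_j\}$ of the paraboloid are transversal: there is $c>0$ with $|v_1\wedge\dots\wedge v_k|\ge c$ for all choices of unit normal vectors $v_j$ to $S_j$. Let $\pi_l$ denote the projection onto the $l$-th coordinate axis $e_l$. A collection $\{Q_1,\dots,Q_k\}$ is weakly transversal with pivot $Q_j$ if there are $k-1$ distinct indices $i_1,\dots,i_{k-1}$ and an enumeration $l_1,\dots,l_{k-1}$ of $\{1,\dots,k\}\setminus\{j\}$ such that $\overline{\pi_{i_s}(Q_j)}\cap\overline{\pi_{i_s}(Q_{l_s})}=\emptyset$ for $s=1,\dots,k-1$. The collection is weakly transversal if it is weakly transversal with pivot $Q_j$ for every $1\le j\le k$. *)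

From HB Require Import structures.
From mathcomp Require Import all_boot all_order all_algebra.
From mathcomp Require Import all_classical all_reals all_analysis.
Set Implicit Arguments. Unset Strict Implicit. Unset Printing Implicit Defensive.
Import Order.TTheory GRing.Theory Num.Theory numFieldTopology.Exports numFieldNormedType.Exports.
Local Open Scope classical_set_scope.
Local Open Scope ring_scope.

(* A "cube" = bounded nondegenerate rectangular box in R^d, taken half-open
   [a_1,b_1) x ... x [a_d,b_d) so that partitions are genuinely disjoint.
   Points of R^d are row vectors 'rV[R]_d. *)
Definition is_cube (R : realType) (d : nat) (Q : set 'rV[R]_d) : Prop :=
  exists a b : 'I_d -> R, (forall i, a i < b i) /\
    Q = [set x | forall i, a i <= x ord0 i < b i].

Definition sqnorm (R : realType) (n : nat) (x : 'rV[R]_n) : R :=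
  \sum_(i < n) x ord0 i ^+ 2.

(* v is a unit normal vector to the paraboloid {(xi,|xi|^2)} at the point
   (xi,|xi|^2): the normal line there is spanned by (-2 xi, 1). *)
Definition unit_normal_at (R : realType) (d : nat) (xi : 'rV[R]_d)
    (v : 'rV[R]_(d + 1)) : Prop :=
  sqnorm v = 1 /\ exists t : R, v = t *: row_mx (- (2 : R) *: xi) (const_mx 1).

Definition unit_normal_to_cap (R : realType) (d : nat) (Q : set 'rV[R]_d)
    (v : 'rV[R]_(d + 1)) : Prop :=
  exists2 xi, Q xi & unit_normal_at xi v.

(* |v_1 /\ ... /\ v_k| = sqrt of the Gram determinant of the v_j *)
Definition wedge_norm (R : realType) (k n : nat) (v : 'I_k -> 'rV[R]_n) : R :=
  let V := \matrix_(j < k, i < n) v j ord0 i in Num.sqrt (\det (V *m V^T)).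

Definition transversal_cubes (R : realType) (d k : nat) (Q : 'I_k -> set 'rV[R]_d)
    : Prop :=
  exists2 c : R, 0 < c &
    forall v : 'I_k -> 'rV[R]_(d + 1),
      (forall j, unit_normal_to_cap (Q j) (v j)) -> c <= wedge_norm v.

Definition proj_coord (R : realType) (d : nat) (i : 'I_d) (x : 'rV[R]_d) : R :=
  x ord0 i.

Definition weakly_transversal_pivot (R : realType) (d k : nat)
    (Q : 'I_k -> set 'rV[R]_d) (j : 'I_k) : Prop :=
  exists (i : 'I_k.-1 -> 'I_d) (l : 'I_k.-1 -> 'I_k),
    injective i /\ injective l /\ (forall s, l s != j) /\
    forall s, @closure R (proj_coord (i s) @` Q j)
              `&` @closure R (proj_coord (i s) @` Q (l s)) = set0.

Definition weakly_transversal (R : realType) (d k : nat)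
    (Q : 'I_k -> set 'rV[R]_d) : Prop :=
  forall j, weakly_transversal_pivot Q j.

From HB Require Import structures.
From mathcomp Require Import all_boot all_order all_algebra.
From mathcomp Require Import all_classical all_reals all_analysis.
From mathcomp Require Import perm ring lra.
Import Order.TTheory GRing.Theory Num.Theory numFieldTopology.Exports numFieldNormedType.Exports.
Local Open Scope classical_set_scope.
Local Open Scope ring_scope.
Set Implicit Arguments. Unset Strict Implicit. Unset Printing Implicit Defensive.

(* For points xi_l of the cubes, the unit normals at (xi_l, |xi_l|^2) are
   multiples, by factors in (0, 1], of w_l = (-2 xi_l, 1), so transversality
   bounds the Gram determinant of the w_l below by c^2.  Subtracting w_j from
   the other rows preserves it and kills their last coordinate.  By
   Cauchy-Binet and the Leibniz formula, a matrix with bounded entries and Gram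
   determinant >= e assigns injectively to each row a column where its entry
   is >~ e; for the rows l <> j these columns are coordinates i_l with
   |xi_l i_l - xi_j i_l| >= eta, where eta depends only on c, k, d and a bound
   on the cubes.  Cutting the cubes into grids of mesh < eta and taking the
   xi_l to be the corners of the chosen cells separates, for every pivot j,
   the projections of cell j and cell l onto coordinate i_l. *)

Lemma exists_nonneg_ub (R : realDomainType) (I : finType) (f : I -> R) :
  exists2 B, 0 <= B & forall i, f i <= B.
Proof. by exists (\big[Num.max/0]_i f i); [exact: bigmax_ge_id | exact: le_bigmax]. Qed.

Lemma bigcup_enum_val (T : finType) U (G : T -> set U) :
  \bigcup_(i in [set: 'I_#|T|]) G (enum_val i) = \bigcup_(x in [set: T]) G x.
Proof.
apply/seteqP; split=> u [x _ Gx]; first by exists (enum_val x).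
by exists (enum_rank x); rewrite ?enum_rankK.
Qed.

Lemma det_mulmx_sum_rowsub (R : comPzRingType) k n (A : 'M[R]_(k, n)) (B : 'M[R]_(n, k)) :
  \det (A *m B) = \sum_(f : {ffun 'I_k -> 'I_n}) (\prod_a A a (f a)) * \det (rowsub f B).
Proof.
rewrite [LHS]/determinant.
under eq_bigr => s _.
  rewrite (eq_bigr (fun i => \sum_m A i m * B m (s i))); last by move=> i _; rewrite mxE.
  rewrite bigA_distr_bigA big_distrr /=.
  over.
rewrite exchange_big /=; apply: eq_bigr => f _.
rewrite /determinant big_distrr /=; apply: eq_bigr => s _.
rewrite big_split /= mulrCA; congr (_ * (_ * _)).
by apply: eq_bigr => i _; rewrite !mxE.
Qed.

Lemma rowsub_det_neq0_inj (R : comPzRingType) k n (f : 'I_k -> 'I_n) (B : 'M[R]_(n, k)) :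
  \det (rowsub f B) != 0 -> injective f.
Proof.
move=> detN0 a a' faa'; apply/eqP; apply: contraNT detN0 => neq_aa'.
by apply/eqP; apply: (determinant_alternate neq_aa') => b; rewrite !mxE faa'.
Qed.

Lemma det_gram_mull (R : comPzRingType) k n (A : 'M[R]_k) (W : 'M[R]_(k, n)) :
  \det ((A *m W) *m (A *m W)^T) = \det A ^+ 2 * \det (W *m W^T).
Proof.
by rewrite trmx_mul !mulmxA det_mulmx -mulmxA !det_mulmx det_tr expr2; ring.
Qed.

Definition pivot_mx (R : pzRingType) k (j : 'I_k) : 'M[R]_k :=
  \matrix_(b, c) ((b == c)%:R - ((b != j) && (c == j))%:R).

Lemma det_pivot_mx (R : comPzRingType) k (j : 'I_k) : \det (pivot_mx R j) = 1.
Proof.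
case: k j => [[]//|k] j.
rewrite (expand_det_row _ j) (bigD1 j) //= big1 ?addr0; last first.
  by move=> c neq_cj; rewrite !mxE eqxx /= eq_sym (negbTE neq_cj) subr0 mul0r.
rewrite !mxE !eqxx /= subr0 mul1r /cofactor addnn -signr_odd odd_double expr0 mul1r.
have -> : row' j (col' j (pivot_mx R j)) = 1%:M.
  apply/matrixP => a b; rewrite !mxE (inj_eq (@lift_inj _ j)).
  by rewrite [lift j b == j]eq_sym (negbTE (neq_lift _ _)) andbF subr0.
by rewrite det1.
Qed.

Lemma mul_pivot_mxE (R : pzRingType) k n (j : 'I_k) (W : 'M[R]_(k, n)) b m :
  (pivot_mx R j *m W) b m = W b m - (b != j)%:R * W j m.
Proof.
rewrite !mxE; under eq_bigr => c _ do rewrite !mxE mulrBl.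
rewrite sumrB (bigD1 b) //= eqxx mul1r big1 ?addr0; last first.
  by move=> c /negbTE; rewrite eq_sym => ->; rewrite mul0r.
rewrite (bigD1 j) //= eqxx andbT big1 ?addr0 //.
by move=> c /negbTE ->; rewrite andbF mul0r.
Qed.

Section LargeEntries.
Variable R : realFieldType.

Lemma exists_ge_average (I : finType) (x : I -> R) (e : R) :
  0 < e -> e <= \sum_i x i -> exists i, e <= #|I|%:R * x i.
Proof.
move=> e_gt0 le_e_sum; apply: contrapT => /forallNP small.
have {}small i : #|I|%:R * x i < e by rewrite ltNge; apply/negP/small.
have [i0 _ | I0] := pickP (fun _ : I => true); last first.
  by move: le_e_sum; rewrite big_pred0 // leNgt e_gt0.
have : \sum_i #|I|%:R * x i < \sum_(i : I) e.
  by apply: ltr_sum => //; apply/hasP; exists i0; rewrite ?mem_index_enum.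
rewrite -mulr_sumr sumr_const -[#|xpredT|]/#|I| -[e *+ _]mulr_natr mulrC ltNge.
by rewrite ler_pM2r ?le_e_sum // ltr0n; apply/card_gt0P; exists i0.
Qed.

Lemma norm_prod_le_factor (I : finType) (F : I -> R) (M : R) (i : I) :
  1 <= M -> (forall j, `|F j| <= M) -> `|\prod_j F j| <= `|F i| * M ^+ #|I|.
Proof.
move=> M_ge1 le_FM; rewrite (bigD1 i) //= normrM ler_wpM2l // normr_prod.
apply: le_trans (_ : \prod_(j | j != i) M <= _).
  by apply: ler_prod => j _; rewrite normr_ge0 le_FM.
rewrite -prodr_const [leRHS](bigD1 i) //= ler_peMl ?prodr_ge0 // => j _.
exact: le_trans M_ge1.
Qed.

Lemma norm_prod_le (I : finType) (F : I -> R) (M : R) :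
  (forall i, `|F i| <= M) -> `|\prod_i F i| <= M ^+ #|I|.
Proof.
move=> le_FM; rewrite normr_prod -prodr_const; apply: ler_prod => i _.
by rewrite normr_ge0 le_FM.
Qed.

Lemma gram_det_large_matching k n (U : 'M[R]_(k, n)) (M e : R) :
  1 <= M -> (forall a m, `|U a m| <= M) -> 0 < e -> e <= \det (U *m U^T) ->
  exists2 g : 'I_k -> 'I_n, injective g & forall a,
    e <= #|{ffun 'I_k -> 'I_n}|%:R * #|{perm 'I_k}|%:R * M ^+ (k + k) * `|U a (g a)|.
Proof.
move=> M_ge1 le_UM e_gt0 le_e_det.
have M_ge0 : 0 <= M by apply: le_trans M_ge1.
set cF := #|{ffun _ -> _}|%:R; set cS := #|{perm _}|%:R.
have [f le_e_f] : exists f : {ffun 'I_k -> 'I_n},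
    e <= cF * (M ^+ k * `|\det (rowsub f U^T)|).
  apply: exists_ge_average => //; apply: le_trans le_e_det _.
  rewrite det_mulmx_sum_rowsub; apply: le_trans (ler_norm _) _.
  apply: le_trans (ler_norm_sum _ _ _) _; apply: ler_sum => f _.
  rewrite normrM ler_wpM2r //.
  by rewrite -[k in M ^+ k]card_ord; apply: norm_prod_le => a; apply: le_UM.
have f_inj : injective f.
  apply: (@rowsub_det_neq0_inj _ _ _ _ U^T); apply: contraTneq le_e_f => ->.
  by rewrite normr0 !mulr0 -ltNge.
have cF_ge0 : 0 <= cF by rewrite ler0n.
have cS_ge0 : 0 <= cS by rewrite ler0n.
set Y := rowsub f U^T in le_e_f f_inj.
have [s le_e_s] : exists s : 'S_k,
    e <= cS * (cF * M ^+ k * `|\prod_a Y a (s a)|).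
  apply: exists_ge_average => //; apply: le_trans le_e_f _.
  rewrite -mulr_sumr mulrA ler_wpM2l ?mulr_ge0 ?exprn_ge0 //.
  apply: le_trans (ler_norm_sum _ _ _) _; apply: ler_sum => s _.
  by rewrite normrM normrX normrN normr1 expr1n mul1r.
exists (fun b => f ((s^-1)%g b)); first by move=> b b' /f_inj /perm_inj.
move=> b; apply: le_trans le_e_s _.
have le_YM a : `|Y a (s a)| <= M by rewrite !mxE.
have := norm_prod_le_factor ((s^-1)%g b) M_ge1 le_YM.
rewrite card_ord !mxE permKV => le_prod.
have -> : cF * cS * M ^+ (k + k) * `|U b (f ((s^-1)%g b))|
    = cS * (cF * M ^+ k * (`|U b (f ((s^-1)%g b))| * M ^+ k)) by rewrite exprD; ring.
by rewrite ler_wpM2l // ler_wpM2l ?mulr_ge0 ?exprn_ge0.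
Qed.
End LargeEntries.

Lemma sqnormZ (R : realType) n (t : R) (v : 'rV[R]_n) :
  sqnorm (t *: v) = t ^+ 2 * sqnorm v.
Proof. by rewrite /sqnorm mulr_sumr; apply: eq_bigr => i _; rewrite mxE exprMn. Qed.

Section ParaboloidNormals.
Variables (R : realType) (d : nat).

Definition normal_dir (xi : 'rV[R]_d) : 'rV[R]_(d + 1) :=
  row_mx (- 2 *: xi) (const_mx 1).

Definition unit_normal (xi : 'rV[R]_d) : 'rV[R]_(d + 1) :=
  (Num.sqrt (sqnorm (normal_dir xi)))^-1 *: normal_dir xi.

Lemma normal_dir_lshift (xi : 'rV[R]_d) i :
  normal_dir xi ord0 (lshift 1 i) = - 2 * xi ord0 i.
Proof. by rewrite row_mxEl !mxE. Qed.

Lemma normal_dir_rshift (xi : 'rV[R]_d) o : normal_dir xi ord0 (rshift d o) = 1.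
Proof. by rewrite row_mxEr mxE. Qed.

Lemma sqnorm_normal_dir_ge1 (xi : 'rV[R]_d) : 1 <= sqnorm (normal_dir xi).
Proof.
rewrite /sqnorm big_split_ord /= big_ord1 normal_dir_rshift expr1n lerDr.
by apply: sumr_ge0 => i _; apply: sqr_ge0.
Qed.

Lemma unit_normal_scale_gt0_le1 (xi : 'rV[R]_d) :
  0 < (Num.sqrt (sqnorm (normal_dir xi)))^-1 <= 1.
Proof.
have ge1 : 1 <= Num.sqrt (sqnorm (normal_dir xi)).
  rewrite -sqrtr1 ler_sqrt ?sqnorm_normal_dir_ge1 //.
  exact: le_trans ler01 (sqnorm_normal_dir_ge1 xi).
by rewrite invr_gt0 (lt_le_trans ltr01 ge1) invr_le1 ?unitf_gt0 ?(lt_le_trans ltr01 ge1).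
Qed.

Lemma unit_normal_at_unit_normal (xi : 'rV[R]_d) : unit_normal_at xi (unit_normal xi).
Proof.
split; last by exists (Num.sqrt (sqnorm (normal_dir xi)))^-1.
have ge1 := sqnorm_normal_dir_ge1 xi.
rewrite sqnormZ exprVn sqr_sqrtr ?mulVf //; first by rewrite gt_eqF // (lt_le_trans ltr01).
exact: le_trans ge1.
Qed.

Definition normal_mx k (xi : 'I_k -> 'rV[R]_d) : 'M[R]_(k, d + 1) :=
  \matrix_l normal_dir (xi l).

Lemma normal_mxE k (xi : 'I_k -> 'rV[R]_d) l m : normal_mx xi l m = normal_dir (xi l) ord0 m.
Proof. by rewrite mxE. Qed.

Lemma gram_det_normal_mx_ge k (xi : 'I_k -> 'rV[R]_d) (c : R) :
  0 < c -> c <= wedge_norm (fun l => unit_normal (xi l)) ->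
  c ^+ 2 <= \det (normal_mx xi *m (normal_mx xi)^T).
Proof.
set W := normal_mx xi; set t := \row_l (Num.sqrt (sqnorm (normal_dir (xi l))))^-1.
have -> : wedge_norm (fun l => unit_normal (xi l))
    = Num.sqrt (\det ((diag_mx t *m W) *m (diag_mx t *m W)^T)).
  congr (Num.sqrt (\det (_ *m _^T)));
  by apply/matrixP => l m; rewrite mul_diag_mx !mxE.
rewrite det_gram_mull det_diag => c_gt0 le_c_sqrt.
have t_bounds l : 0 < t ord0 l <= 1 by rewrite mxE unit_normal_scale_gt0_le1.
have p_gt0 : 0 < \prod_l t ord0 l by apply: prodr_gt0 => l _; case/andP: (t_bounds l).
have p_le1 : \prod_l t ord0 l <= 1.
  by apply: prodr_ile1 => l _; case/andP: (t_bounds l) => /ltW -> ->.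
set p := \prod_l t ord0 l in p_gt0 p_le1 le_c_sqrt; set G := \det (W *m W^T) in le_c_sqrt *.
have pG_ge0 : 0 <= p ^+ 2 * G.
  rewrite leNgt; apply/negP => /ltr0_sqrtr sqrt0.
  by move: le_c_sqrt; rewrite sqrt0 leNgt c_gt0.
have : c ^+ 2 <= p ^+ 2 * G by rewrite -ler_sqrt // sqrtr_sqr gtr0_norm.
have : 0 < c ^+ 2 by rewrite exprn_gt0.
have : p ^+ 2 <= 1 by rewrite expr_le1 // ltW.
have : 0 < p ^+ 2 by rewrite exprn_gt0.
nra.
Qed.

Lemma pivot_normal_mx_lift k (xi : 'I_k -> 'rV[R]_d) j s m :
  (pivot_mx R j *m normal_mx xi) (lift j s) m
    = normal_dir (xi (lift j s)) ord0 m - normal_dir (xi j) ord0 m.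
Proof. by rewrite mul_pivot_mxE eq_sym (negbTE (neq_lift _ _)) mul1r !normal_mxE. Qed.

Lemma norm_pivot_normal_mx_le k (xi : 'I_k -> 'rV[R]_d) (B : R) j b m :
  0 <= B -> (forall l i, `|xi l ord0 i| <= B) ->
  `|(pivot_mx R j *m normal_mx xi) b m| <= 4 * B + 2.
Proof.
move=> B_ge0 le_xiB.
have le_normal l : `|normal_mx xi l m| <= 2 * B + 1.
  rewrite normal_mxE; case: (split_ordP m) => [i ->|o ->].
    by rewrite normal_dir_lshift normrM normrN normr_nat; have := le_xiB l i; lra.
  by rewrite normal_dir_rshift normr1; lra.
rewrite mul_pivot_mxE; apply: le_trans (ler_normB _ _) _.
have := le_normal b; have := le_normal j.
by case: (b != j); rewrite ?mul1r ?mul0r ?normr0; lra.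
Qed.

Lemma transversal_points_separated k (c B : R) : 0 < c -> 0 <= B ->
  exists2 eta : R, 0 < eta & forall (xi : 'I_k -> 'rV[R]_d) (j : 'I_k),
    (forall l i, `|xi l ord0 i| <= B) ->
    c <= wedge_norm (fun l => unit_normal (xi l)) ->
    exists2 i : 'I_k.-1 -> 'I_d, injective i &
      forall s, eta <= `|xi (lift j s) ord0 (i s) - xi j ord0 (i s)|.
Proof.
move=> c_gt0 B_ge0; have M_ge1 : 1 <= 4 * B + 2 by lra.
set C := #|{ffun 'I_k -> 'I_(d + 1)}|%:R * #|{perm 'I_k}|%:R * (4 * B + 2) ^+ (k + k).
have C_gt0 : 0 < C.
  rewrite !mulr_gt0 ?exprn_gt0 ?(lt_le_trans ltr01) // ler1n; apply/card_gt0P.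
    by exists [ffun=> rshift d ord0 : 'I_(d + 1)].
  by exists 1%g.
have c2_gt0 : 0 < c ^+ 2 by rewrite exprn_gt0.
exists (c ^+ 2 / (2 * C)); first by rewrite divr_gt0 // mulr_gt0.
move=> xi j le_xiB le_c_wedge; set U := pivot_mx R j *m normal_mx xi.
have le_c2_U : c ^+ 2 <= \det (U *m U^T).
  by rewrite det_gram_mull det_pivot_mx expr1n mul1r; exact: gram_det_normal_mx_ge.
have [g g_inj le_c2_g] := gram_det_large_matching M_ge1
  (fun b m => norm_pivot_normal_mx_le j b m B_ge0 le_xiB) c2_gt0 le_c2_U.
have lshift_g s : exists2 i, g (lift j s) = lshift 1 i &
    c ^+ 2 <= C * (2 * `|xi (lift j s) ord0 i - xi j ord0 i|).
  have := le_c2_g (lift j s); rewrite -/C pivot_normal_mx_lift.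
  case: (split_ordP (g (lift j s))) => [i ->|o ->]; last first.
    by rewrite !normal_dir_rshift subrr normr0 mulr0 leNgt c2_gt0.
  move=> le_c2; exists i => //; move: le_c2.
  by rewrite !normal_dir_lshift -mulrBr normrM normrN normr_nat.
have [i g_lift le_c2_i] := fin_all_exists2 lshift_g.
exists i => [s s' eq_i|s].
  by apply: (@lift_inj _ j); apply: g_inj; rewrite !g_lift eq_i.
rewrite ler_pdivrMr; last by rewrite mulr_gt0.
by have := le_c2_i s; nra.
Qed.

End ParaboloidNormals.

Definition box (R : realType) d (lo hi : 'I_d -> R) : set 'rV[R]_d :=
  [set x | forall r, lo r <= x ord0 r < hi r].

Lemma closure_proj_box (R : realType) d (lo hi : 'I_d -> R) r :
  closure (proj_coord r @` box lo hi) `<=` [set y | lo r <= y <= hi r].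
Proof.
have closed_itv : closed [set y : R | lo r <= y <= hi r].
  have -> : [set y : R | lo r <= y <= hi r] = [set y | lo r <= y] `&` [set y | y <= hi r].
    by apply/seteqP; split => y /=; [move/andP|move=> [-> ->]].
  exact: closedI (@closed_ge _ _) (@closed_le _ _).
rewrite [X in _ `<=` X](closure_id _).1 //; apply: closureS => _ [x in_x <-].
by have /andP[le_lo /ltW le_hi] := in_x r; apply/andP.
Qed.

Lemma box_norm_le (R : realType) d (lo hi : 'I_d -> R) x r :
  box lo hi x -> `|x ord0 r| <= `|lo r| + `|hi r|.
Proof.
move=> /(_ r) /andP[le_lo lt_hi]; rewrite ler_norml; apply/andP; split.
  by have := ler_norm (- lo r); rewrite normrN; have := normr_ge0 (hi r); lra.
by have := ler_norm (hi r); have := normr_ge0 (lo r); lra.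
Qed.

Section GridIntervals.
Variable R : archiFieldType.

Lemma grid_intervalE (a h y : R) n : 0 < h ->
  (a + n%:R * h <= y < a + n%:R * h + h) = (n%:R <= (y - a) / h < n.+1%:R).
Proof.
move=> h_gt0; rewrite ler_pdivlMr // ltr_pdivrMr // lerBrDl ltrBlDl.
by rewrite -[n.+1%:R]natr1 mulrDl mul1r addrA.
Qed.

Lemma grid_interval_index (a h y : R) N : 0 < h -> a <= y < a + N%:R * h ->
  exists n : 'I_N, a + n%:R * h <= y < a + n%:R * h + h.
Proof.
move=> h_gt0 /andP[le_ay lt_yb].
have t_ge0 : 0 <= (y - a) / h by rewrite divr_ge0 ?subr_ge0 // ltW.
have lt_tN : (Num.truncn ((y - a) / h) < N)%N.
  by rewrite truncn_lt_nat // ltr_pdivrMr // ltrBlDl.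
by exists (Ordinal lt_tN); rewrite grid_intervalE // truncn_itv.
Qed.

Lemma grid_interval_uniq (a h y : R) n n' : 0 < h ->
  a + n%:R * h <= y < a + n%:R * h + h -> a + n'%:R * h <= y < a + n'%:R * h + h ->
  n = n'.
Proof.
by move=> h_gt0; rewrite !grid_intervalE // => /truncn_def <- /truncn_def <-.
Qed.

End GridIntervals.

Section Grid.
Variables (R : realType) (d : nat) (lo hi : 'I_d -> R) (N : nat).

Definition grid_step r := (hi r - lo r) / N%:R.

Definition grid_corner (F : {ffun 'I_d -> 'I_N}) : 'rV[R]_d :=
  \row_r (lo r + (F r)%:R * grid_step r).

Definition grid_cell (F : {ffun 'I_d -> 'I_N}) : set 'rV[R]_d :=
  box (fun r => grid_corner F ord0 r) (fun r => grid_corner F ord0 r + grid_step r).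

Hypotheses (lt_lohi : forall r, lo r < hi r) (N_gt0 : (0 < N)%N).

Lemma grid_step_gt0 r : 0 < grid_step r.
Proof. by rewrite divr_gt0 ?ltr0n // subr_gt0. Qed.

Lemma is_cube_grid_cell F : is_cube (grid_cell F).
Proof.
exists (fun r => grid_corner F ord0 r), (fun r => grid_corner F ord0 r + grid_step r).
by split => // r; rewrite ltrDl grid_step_gt0.
Qed.

Lemma grid_corner_in_cell F : grid_cell F (grid_corner F).
Proof. by move=> r; rewrite lexx ltrDl grid_step_gt0. Qed.

Lemma bigcup_grid_cell :
  \bigcup_(F in [set: {ffun 'I_d -> 'I_N}]) grid_cell F = box lo hi.
Proof.
have hiE r : hi r = lo r + N%:R * grid_step r.
  by rewrite mulrC divfK ?pnatr_eq0 -?lt0n // addrC subrK.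
apply/seteqP; split => [x [F _ in_F] r | x in_box].
  have /andP[le_lo lt_hi] := in_F r; rewrite mxE in le_lo lt_hi.
  rewrite hiE; apply/andP; split.
    by apply: le_trans _ le_lo; rewrite lerDl mulr_ge0 // ltW // grid_step_gt0.
  apply: (lt_le_trans lt_hi); rewrite -addrA lerD2l -[X in _ + X <= _]mul1r -mulrDl natr1.
  by rewrite ler_pM2r ?grid_step_gt0 // ler_nat.
have in_grid r : lo r <= x ord0 r < lo r + N%:R * grid_step r by rewrite -hiE; exact: in_box.
have /fin_all_exists[F in_F] r := grid_interval_index (grid_step_gt0 r) (in_grid r).
by exists [ffun r => F r] => // r; rewrite mxE ffunE.
Qed.

Lemma grid_cell_disj F F' : F != F' -> grid_cell F `&` grid_cell F' = set0.
Proof.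
move=> neq_FF'; rewrite -subset0 => x [in_F in_F'].
move: neq_FF' => /eqP; apply; apply/ffunP => r; apply: val_inj.
have := in_F r; have := in_F' r; rewrite !mxE => in_F'r in_Fr.
exact: grid_interval_uniq (grid_step_gt0 r) in_Fr in_F'r.
Qed.

End Grid.

Lemma grid_step_lt (R : realType) d (lo hi : 'I_d -> R) (B eta : R) r :
  0 < eta -> hi r - lo r <= B -> grid_step lo hi (Num.truncn (B / eta)).+1 r < eta.
Proof.
move=> eta_gt0 le_B; rewrite ltr_pdivrMr ?ltr0n // -ltr_pdivrMl // mulrC.
by apply: le_lt_trans (truncnS_gt _); rewrite ler_pM2r ?invr_gt0.
Qed.

Lemma weakly_transversal_pivot_grid (R : realType) d k N (lo hi : 'I_k -> 'I_d -> R)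
    (F : 'I_k -> {ffun 'I_d -> 'I_N}) (eta : R) (j : 'I_k) :
  (forall l r, grid_step (lo l) (hi l) N r < eta) ->
  (exists2 i : 'I_k.-1 -> 'I_d, injective i & forall s, eta <=
    `|grid_corner (lo (lift j s)) (hi (lift j s)) (F (lift j s)) ord0 (i s)
      - grid_corner (lo j) (hi j) (F j) ord0 (i s)|) ->
  weakly_transversal_pivot (fun l => grid_cell (lo l) (hi l) (F l)) j.
Proof.
move=> step_lt [i i_inj eta_le].
exists i, (lift j); split; [exact: i_inj | split; [exact: lift_inj | split]].
  by move=> s; rewrite eq_sym neq_lift.
move=> s; rewrite -subset0 => y [].
move=> /closure_proj_box/andP[y_ge_j y_le_j] /closure_proj_box/andP[y_ge_s y_le_s].
have := eta_le s; rewrite ler_normr.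
have := step_lt j (i s); have := step_lt (lift j s) (i s).
set xj := grid_corner _ _ (F j) _ _ in y_ge_j y_le_j *.
set xs := grid_corner _ _ (F (lift j s)) _ _ in y_ge_s y_le_s *.
by move=> ? ? /orP[]; lra.
Qed.

Theorem claim3p4 (R : realType) (d k : nat) (Q : 'I_k -> set 'rV[R]_d) :
  (2 <= k)%N -> (k <= d.+1)%N ->
  (forall l, is_cube (Q l)) -> transversal_cubes Q ->
  exists (n : 'I_k -> nat) (sub : forall l : 'I_k, 'I_(n l) -> set 'rV[R]_d),
    (forall l i, is_cube (sub l i)) /\
    (forall l, Q l = \bigcup_(i in [set: 'I_(n l)]) sub l i) /\
    (forall l (i i' : 'I_(n l)), i != i' -> sub l i `&` sub l i' = set0) /\
    (forall c : forall l : 'I_k, 'I_(n l),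
        weakly_transversal (fun l => sub l (c l))).
Proof.
move=> _ _ cubeQ [c c_gt0 transQ].
have /fin_all_exists[lo /fin_all_exists[hi Q_box]] :
    forall l, exists lo hi, (forall r, lo r < hi r) /\ Q l = box lo hi := cubeQ.
have [B B_ge0 le_B] :=
  exists_nonneg_ub (fun lr : 'I_k * 'I_d => `|lo lr.1 lr.2| + `|hi lr.1 lr.2|).
have [eta eta_gt0 separated] := transversal_points_separated d k c_gt0 B_ge0.
pose N := (Num.truncn (B / eta)).+1; have N_gt0 : (0 < N)%N by [].
have step_lt_eta l r : grid_step (lo l) (hi l) N r < eta.
  apply: grid_step_lt => //; have := le_B (l, r).
  by have := ler_norm (hi l r); have := ler_norm (- lo l r); rewrite normrN /=; lra.
have Q_cells l : Q l = \bigcup_(F in [set: {ffun 'I_d -> 'I_N}]) grid_cell (lo l) (hi l) F.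
  by rewrite (Q_box l).2 (bigcup_grid_cell (Q_box l).1 N_gt0).
pose cell l (i : 'I_#|{ffun 'I_d -> 'I_N}|) := grid_cell (lo l) (hi l) (enum_val i).
exists (fun _ => #|{ffun 'I_d -> 'I_N}|), cell; split; [|split; [|split]].
- by move=> l i; exact: is_cube_grid_cell (Q_box l).1 N_gt0 _.
- by move=> l; rewrite bigcup_enum_val Q_cells.
- move=> l i i' neq_ii'; apply: grid_cell_disj (Q_box l).1 N_gt0 _ _ _.
  by rewrite (inj_eq enum_val_inj).
move=> sel j; pose xi l := grid_corner (lo l) (hi l) (enum_val (sel l)).
have Q_xi l : Q l (xi l).
  rewrite Q_cells; exists (enum_val (sel l)) => //.
  exact: grid_corner_in_cell (Q_box l).1 N_gt0 _.
apply: (weakly_transversal_pivot_grid (F := fun l => enum_val (sel l)) step_lt_eta).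
apply: (separated xi).
  by move=> l r; apply: le_trans (box_norm_le r _) (le_B (l, r)); rewrite -(Q_box l).2.
by apply: transQ => l; exists (xi l); [exact: Q_xi | exact: unit_normal_at_unit_normal].
Qed.
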